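(* Let $\mathcal B$ be a BMC with $\mathbf c^*_q<\infty$ for all $q\in\mathcal T$, and consider the Q-learning process with learning rates $\lambda_i\in[0,1]$ satisfying $\sum_{i=0}^\infty\lambda_i=\infty$ and a fixed selection distribution with $p_q\ge p_{\min}>0$ for all $q$. Then for every initial vector $Q_0\ge\mathbf 0$, $\lim_{i\to\infty}\mathbb E Q_i=\mathbf c^*$.
   Context: A branching Markov chain (BMC) is $\mathcal B=(\mathcal T,p,c)$ with $\mathcal T$ a finite set of types, $p(q)$ for each $q\in\mathcal T$ a probability distribution with finite support over finite lists $\mathcal T^*$ of types (the offspring distribution), and $c:\mathcal T\to\mathbb R_{>0}$ a strictly positive cost. For a list $\alpha$, $|\alpha|$ is its length and $\alpha_i$ its $i$-th element. $\mathbf c^*_q\in[0,\infty]$ denotes the expected total cost until extinction starting from the single entity $q$; equivalently $\mathbf c^*$ is the least fixed point in $[0,\infty]^{\mathcal T}$ of $F(\mathbf x)_q=c(q)+\sum_\alpha p(q)(\alpha)\sum_{i=1}^{|\alpha|}\mathbf x_{\alpha_i}$. Q-learning process for a BMC: given deterministic learning rates $\lambda_i\in[0,1]$, a probability distribution $(p_q)_{q\in\mathcal T}$ and an initial vector $Q_0\in\mathbb R_{\ge0}^{\mathcal T}$, at each step $i=0,1,2,\dots$ a type $q_i$ is selected with probability $p_{q_i}$ independently of all previous randomness, then a list $\beta^i$ is drawn from $p(q_i)$ independently, and $Q_{i+1}(q_i)=(1-\lambda_i)Q_i(q_i)+\lambda_i\big(c(q_i)+\sum_{j=1}^{|\beta^i|}Q_i(\beta^i_j)\big)$,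 while $Q_{i+1}(q)=Q_i(q)$ for $q\ne q_i$. $\mathbb E Q_i$ is the componentwise expectation. *)

From HB Require Import structures.
From mathcomp Require Import all_boot all_order all_algebra.
From mathcomp Require Import all_classical all_reals all_analysis.
Set Implicit Arguments. Unset Strict Implicit. Unset Printing Implicit Defensive.
Import Order.TTheory GRing.Theory Num.Theory.
Local Open Scope ring_scope.

Section BMC.
Variables (R : realType) (T : finType).

(* A BMC (T, p, c): types T (a finType), cost c : T -> R, and for every type q
   an offspring distribution p(q) with finite support [supp q] (a duplicate-free
   list of lists of types), given by the weights [pr q alpha]. *)
Definition is_BMC (c : T -> R) (pr : T -> seq T -> R) (supp : T -> seq (seq T)) :=
  [/\ forall q, 0 < c q,
      forall q a, 0 <= pr q a,
      forall q a, a \notin supp q -> pr q a = 0,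
      forall q, uniq (supp q)
    & forall q, \sum_(a <- supp q) pr q a = 1].

Definition Fop (c : T -> R) (pr : T -> seq T -> R) (supp : T -> seq (seq T))
    (x : T -> \bar R) : T -> \bar R :=
  fun q => ((c q)%:E + \sum_(a <- supp q) ((pr q a)%:E * \sum_(t <- a) x t))%E.

Definition is_least_fixpoint c pr supp (cs : T -> \bar R) :=
  [/\ forall q, (0 <= cs q)%E,
      Fop c pr supp cs = cs
    & forall x : T -> \bar R, (forall q, (0 <= x q)%E) -> Fop c pr supp x = x ->
        forall q, (cs q <= x q)%E].

Definition qupdate (c : T -> R) (Q : T -> R) (l : R) (q : T) (b : seq T) : T -> R :=
  fun r => if r == q then (1 - l) * Q q + l * (c q + \sum_(t <- b) Q t) else Q r.

(* [EQ c pr supp ps lam n k Q] is the expectation (componentwise) of the vector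
   obtained after n further Q-learning steps, the first of which has index k,
   starting from the (deterministic) vector Q: each step independently selects
   q with probability ps q, then draws b with probability pr q b. *)
Fixpoint EQ (c : T -> R) (pr : T -> seq T -> R) (supp : T -> seq (seq T))
    (ps : T -> R) (lam : nat -> R) (n k : nat) (Q : T -> R) : T -> R :=
  match n with
  | 0 => Q
  | n'.+1 => fun r => \sum_(q : T) ps q * \sum_(b <- supp q)
        pr q b * EQ c pr supp ps lam n' k.+1 (qupdate c Q (lam k) q b) r
  end.

Definition EQi c pr supp ps lam (Q0 : T -> R) (i : nat) : T -> R :=
  EQ c pr supp ps lam i 0 Q0.

End BMC.

From HB Require Import structures.
From mathcomp Require Import all_boot all_order all_algebra.
From mathcomp Require Import all_classical all_reals all_analysis.
From mathcomp Require Import ring lra.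
Set Implicit Arguments. Unset Strict Implicit. Unset Printing Implicit Defensive.
Import Order.TTheory GRing.Theory Num.Theory.
Import numFieldNormedType.Exports.
Local Open Scope classical_set_scope.
Local Open Scope ring_scope.

(* The proof is deterministic.  Since one Q-learning step is affine in the
   current vector and the randomness of a step is independent of the past,
   the expectation E Q_i itself follows the averaged recursion
     x_{i+1}(r) = x_i(r) + p_r lam_i (c(r) + B x_i (r) - x_i(r)),
   where B x (r) is the expected total value of the offspring of r.
   Since c* = s is finite, it is a real fixed point s = c + B s with s > 0, and
   B s <= gam s for some gam < 1, so B is a contraction for the weighted
   sup-norm |y|_s = max_r |y(r)|/s(r).  A weighted error bound m is then
   preserved by every step, and once the accumulated rates
   sum_i p_min lam_i have grown by 1/p_min it has shrunk to (1+gam)/2 * m.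
   The divergence of sum_i lam_i gives infinitely many such shrinkings. *)

Section OffspringOperator.
Variables (R : realType) (T : finType) (pr : T -> seq T -> R)
  (supp : T -> seq (seq T)).

Definition Bop (Q : T -> R) (r : T) : R :=
  \sum_(b <- supp r) pr r b * \sum_(t <- b) Q t.

Lemma BopB (x y : T -> R) r : Bop x r - Bop y r = Bop (fun t => x t - y t) r.
Proof. by rewrite /Bop -sumrB; apply: eq_bigr => b _; rewrite -mulrBr sumrB. Qed.

Lemma Bop_norm_le (e s : T -> R) m r : (forall q a, 0 <= pr q a) ->
  (forall t, `|e t| <= m * s t) -> `|Bop e r| <= m * Bop s r.
Proof.
move=> pr_ge0 le_es; rewrite /Bop mulr_sumr; apply: le_trans (ler_norm_sum _ _ _) _.
apply: ler_sum => b _; rewrite normrM ger0_norm // mulrCA; apply: ler_wpM2l => //.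
by apply: le_trans (ler_norm_sum _ _ _) _; rewrite mulr_sumr; exact: ler_sum.
Qed.

End OffspringOperator.

(* This elementary bound
   replaces the usual exp(- sum_k b_k) estimate. *)
Lemma damped_decay (R : realFieldType) (v a b : nat -> R) (K : nat) :
  (forall k, (K <= k)%N ->
     [/\ 0 <= b k, b k <= a k, a k <= 1 & v k.+1 <= (1 - a k) * v k]) ->
  forall j, v (K + j)%N * (1 + \sum_(K <= k < K + j) b k) <= Num.max (v K) 0.
Proof.
move=> damp; elim=> [|j IH].
  by rewrite addn0 big_geq // addr0 mulr1 le_max lexx.
have [b0 ba a1 vrec] := damp _ (leq_addr j K).
rewrite addnS big_nat_recr ?leq_addr //=.
set A := \sum_(K <= k < K + j) b k in IH *.
set u := v (K + j)%N in IH vrec *; set u' := v (K + j).+1 in vrec *.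
set ak := a (K + j)%N in ba a1 vrec *; set bk := b (K + j)%N in b0 ba *.
have A0 : 0 <= A.
  by rewrite /A big_nat; apply: sumr_ge0 => k /andP[Kk _]; have [] := damp k Kk.
have max0 : 0 <= Num.max (v K) 0 by rewrite le_max lexx orbT.
have [u0|u0] := leP 0 u; last first.
  have u'0 : u' <= 0 by apply: le_trans vrec _; nra.
  by apply: le_trans max0; rewrite mulr_le0_ge0 //; lra.
apply: le_trans IH; rewrite addrA.
have : u' * (1 + A + bk) <= (1 - ak) * u * (1 + A + bk) by apply: ler_wpM2r => //; lra.
have : (1 - ak) * u * (1 + A + bk) <= (1 - bk) * (1 + A + bk) * u.
  by rewrite mulrAC; apply: ler_wpM2r; [lra | apply: ler_wpM2r => //; lra].
have : (1 - bk) * (1 + A + bk) * u <= (1 + A) * u.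
  by apply: ler_wpM2r => //; nra.
lra.
Qed.

Section AveragedRecursion.
Variables (R : realType) (T : finType) (pr : T -> seq T -> R)
  (supp : T -> seq (seq T)) (c s : T -> R) (gam pmin : R) (lam : nat -> R)
  (al : nat -> T -> R) (x : nat -> T -> R).
Hypothesis pr_ge0 : forall q a, 0 <= pr q a.
Hypothesis s_gt0 : forall r, 0 < s r.
Hypothesis s_fix : forall r, s r = c r + Bop pr supp s r.
Hypothesis gam01 : 0 <= gam < 1.
Hypothesis Bs_le : forall r, Bop pr supp s r <= gam * s r.
Hypothesis al01 : forall i r, 0 <= al i r <= 1.
Hypothesis al_ge : forall i r, pmin * lam i <= al i r.
Hypothesis pmin_gt0 : 0 < pmin.
Hypothesis lam_ge0 : forall i, 0 <= lam i.
Hypothesis lam_div : series lam @ \oo --> +oo.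
Hypothesis x_rec : forall i r, x i.+1 r = x i r + al i r * (c r + Bop pr supp (x i) r - x i r).

Definition err i r := x i r - s r.

Definition bounded m i := forall r, `|err i r| <= m * s r.

Lemma err_rec i r : err i.+1 r = (1 - al i r) * err i r + al i r * Bop pr supp (err i) r.
Proof.
rewrite /err x_rec -BopB.
have -> : c r = s r - Bop pr supp s r by rewrite {1}s_fix addrK.
ring.
Qed.

Lemma err_step m i r : bounded m i ->
  `|err i.+1 r| <= (1 - al i r) * `|err i r| + al i r * (gam * m * s r).
Proof.
move=> bnd; have [a0 a1] := andP (al01 i r).
have m0 : 0 <= m by have := le_trans (normr_ge0 _) (bnd r); rewrite pmulr_lge0.
rewrite err_rec; apply: le_trans (ler_normD _ _) _.
rewrite !normrM (ger0_norm a0) ger0_norm ?subr_ge0 //; apply: lerD => //.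
apply: ler_wpM2l => //; apply: le_trans (Bop_norm_le _ _ pr_ge0 bnd) _.
by rewrite (mulrC gam) -mulrA; apply: ler_wpM2l.
Qed.

(* Since B s <= gam s <= s, a weighted bound is never lost. *)
Lemma bounded_step m i : 0 <= m -> bounded m i -> bounded m i.+1.
Proof.
move=> m0 bnd r; apply: le_trans (err_step r bnd) _.
have [a0 a1] := andP (al01 i r); have [g0 g1] := andP gam01.
have gm : gam * m * s r <= m * s r.
  by rewrite -mulrA ler_piMl ?(mulr_ge0 m0 (ltW (s_gt0 r))) ?(ltW g1).
have := bnd r; have : al i r * (gam * m * s r) <= al i r * (m * s r) by apply: ler_wpM2l.
have : (1 - al i r) * `|err i r| <= (1 - al i r) * (m * s r).
  by apply: ler_wpM2l; rewrite ?subr_ge0.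
lra.
Qed.

Lemma bounded_after m K j : 0 <= m -> bounded m K -> bounded m (K + j)%N.
Proof.
by move=> m0 bnd; elim: j => [|j IH]; rewrite ?addn0 // addnS; apply: bounded_step.
Qed.

(* Once the accumulated rates grow by 1/p_min, the bound shrinks by (1+gam)/2. *)
Lemma bounded_shrink m K : 0 <= m -> bounded m K ->
  exists K', bounded ((1 + gam) / 2 * m) K'.
Proof.
move=> m0 bnd; have [g0 g1] := andP gam01.
have [N _ serN] := cvgry_ge lam_div (series lam K + pmin^-1).
exists (K + N)%N => r; have sr := s_gt0 r.
pose v k := `|err k r| - gam * m * s r.
have damped k : (K <= k)%N -> [/\ 0 <= pmin * lam k, pmin * lam k <= al k r,
    al k r <= 1 & v k.+1 <= (1 - al k r) * v k].
  move=> Kk; have [a0 a1] := andP (al01 k r); split => //.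
  - exact: mulr_ge0 (ltW pmin_gt0) (lam_ge0 k).
  - by have := err_step r (bounded_after (k - K) m0 bnd); rewrite subnKC // /v; lra.
have := @damped_decay _ v (al^~ r) (fun k => pmin * lam k) K damped N.
rewrite -mulr_sumr -sub_series_geq ?leq_addr //.
have rate1 : 1 <= pmin * (series lam (K + N)%N - series lam K).
  by rewrite -ler_pdivrMl // mulr1 lerBrDl; apply: serN; rewrite /= leq_addl.
have gap0 : 0 <= (1 - gam) * m * s r.
  by apply: mulr_ge0; [apply: mulr_ge0 => //; lra | exact: ltW].
have vK : Num.max (v K) 0 <= (1 - gam) * m * s r.
  by rewrite ge_max gap0 andbT; have := bnd r; rewrite /v; lra.
move/le_trans/(_ vK) => decay.
have halve : v (K + N)%N <= (1 - gam) * m * s r / 2.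
  have [vN|vN] := leP 0 (v (K + N)%N); last by lra.
  have : v (K + N)%N * 2 <= v (K + N)%N * (1 + (pmin * (series lam (K + N)%N
    - series lam K))) by apply: ler_wpM2l => //; lra.
  lra.
rewrite /v in halve; lra.
Qed.

Lemma bounded_geometric m : 0 <= m -> bounded m 0 ->
  forall n, exists K, bounded (((1 + gam) / 2) ^+ n * m) K.
Proof.
move=> m0 bnd; have [g0 g1] := andP gam01.
elim=> [|n [K bndK]]; first by exists 0%N; rewrite expr0 mul1r.
have mn0 : 0 <= ((1 + gam) / 2) ^+ n * m by rewrite mulr_ge0 // exprn_ge0 //; lra.
by have [K' bndK'] := bounded_shrink mn0 bndK; exists K'; rewrite exprS -mulrA.
Qed.

Lemma bounded_start : exists2 m, 0 <= m & bounded m 0.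
Proof.
exists (\sum_(r : T) `|err 0 r| / s r).
  by apply: sumr_ge0 => r _; exact: divr_ge0 (ltW (s_gt0 r)).
move=> r; rewrite -ler_pdivrMr //.
by rewrite (bigD1 r) //= lerDl; apply: sumr_ge0 => t _; exact: divr_ge0 (ltW (s_gt0 t)).
Qed.

Theorem averaged_recursion_cvg q : (fun i => x i q) @ \oo --> s q.
Proof.
have [m m0 bnd] := bounded_start; have [g0 g1] := andP gam01.
set rho := (1 + gam) / 2.
have rho0 : 0 <= rho by rewrite /rho; lra.
have rho1 : `|rho| < 1 by rewrite ger0_norm /rho; lra.
have ms0 : 0 <= m * s q := mulr_ge0 m0 (ltW (s_gt0 q)).
apply/cvgrPdist_le => eps eps0.
have ms1 : 0 < m * s q + 1 by rewrite ltr_pwDr.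
have /cvgrPdist_le /(_ _ (divr_gt0 eps0 ms1)) [n _ rho_n] := cvg_expr rho1.
have := rho_n n (leqnn n); rewrite /= sub0r normrN ger0_norm ?exprn_ge0 //.
rewrite ler_pdivlMr // => rho_small.
have [K bndK] := bounded_geometric m0 bnd n.
have rn0 : 0 <= rho ^+ n by rewrite exprn_ge0.
exists K => // i /= Ki.
have := bounded_after (i - K) (mulr_ge0 rn0 m0) bndK q.
rewrite subnKC // /err distrC => le_err; apply: le_trans le_err _.
have : 0 <= rho ^+ n * (m * s q) by rewrite mulr_ge0.
rewrite -mulrA; nra.
Qed.

End AveragedRecursion.

Section ExpectedRecursion.
Variables (R : realType) (T : finType) (c : T -> R) (pr : T -> seq T -> R)
  (supp : T -> seq (seq T)) (ps : T -> R) (lam : nat -> R).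
Hypothesis ps_sum1 : \sum_(q : T) ps q = 1.
Hypothesis pr_sum1 : forall q, \sum_(b <- supp q) pr q b = 1.

Definition affine_map (f : (T -> R) -> T -> R) :=
  forall x y z a r, f (fun t => x t + a * (y t - z t)) r = f x r + a * (f y r - f z r).

Lemma affine_convex (f : (T -> R) -> T -> R) (I : Type) (s : seq I) (w : I -> R)
    (g : I -> T -> R) r :
  affine_map f -> \sum_(i <- s) w i = 1 ->
  f (fun t => \sum_(i <- s) w i * g i t) r = \sum_(i <- s) w i * f (g i) r.
Proof.
move=> aff w1; set f0 := f (fun=> 0) r.
have expand : f (fun t => \sum_(i <- s) w i * g i t) r
    = f0 + \sum_(i <- s) w i * (f (g i) r - f0).
  elim: s {w1} => [|i s IH].
    by rewrite big_nil addr0; congr f; apply: funext => t; rewrite big_nil.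
  have -> : (fun t => \sum_(j <- i :: s) w j * g j t) =
      (fun t => \sum_(j <- s) w j * g j t + w i * (g i t - (fun=> 0) t)).
    by apply: funext => t; rewrite big_cons subr0 addrC.
  by rewrite aff IH big_cons -/f0; ring.
rewrite expand (eq_bigr _ (fun i _ => mulrBr (w i) _ f0)) sumrB -mulr_suml w1.
by rewrite mul1r addrC subrK.
Qed.

Lemma qupdate_affine x y z a l q b :
  qupdate c (fun t => x t + a * (y t - z t)) l q b =
  fun t => qupdate c x l q b t + a * (qupdate c y l q b t - qupdate c z l q b t).
Proof.
apply: funext => t; rewrite /qupdate; case: (t == q) => //.
by rewrite big_split /= -mulr_sumr sumrB; ring.
Qed.

Lemma EQ_affine n k : affine_map (EQ c pr supp ps lam n k).
Proof.
elim: n k => [|n IH] k x y z a r //=.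
rewrite -sumrB mulr_sumr -big_split /=; apply: eq_bigr => q _.
rewrite -mulrBr mulrCA -mulrDr; congr (_ * _).
rewrite -sumrB mulr_sumr -big_split /=; apply: eq_bigr => b _.
by rewrite qupdate_affine IH; ring.
Qed.

Definition mean_step (l : nat) (Q : T -> R) : T -> R :=
  fun t => \sum_(q : T) ps q * \sum_(b <- supp q) pr q b * qupdate c Q (lam l) q b t.

(* By affinity, averaging over the first step can be done before the
   remaining n steps ... *)
Lemma EQ_first n k Q :
  EQ c pr supp ps lam n.+1 k Q = EQ c pr supp ps lam n k.+1 (mean_step k Q).
Proof.
apply: funext => r /=; rewrite /mean_step affine_convex //; last exact: EQ_affine.
by apply: eq_bigr => q _; rewrite affine_convex //; exact: EQ_affine.
Qed.

Lemma EQ_last n k Q :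
  EQ c pr supp ps lam n.+1 k Q = mean_step (k + n) (EQ c pr supp ps lam n k Q).
Proof.
elim: n k Q => [|n IH] k Q; first by rewrite addn0.
by rewrite EQ_first IH EQ_first addSnnS.
Qed.

(* Only the selected coordinate moves, so the mean step moves coordinate r
   towards c r + B Q r with rate ps r * lam l. *)
Lemma mean_stepE l Q r :
  mean_step l Q r = Q r + ps r * lam l * (c r + Bop pr supp Q r - Q r).
Proof.
rewrite /mean_step (bigD1 r) //=.
have -> : \sum_(q | q != r) ps q * \sum_(b <- supp q) pr q b * qupdate c Q (lam l) q b r
     = (1 - ps r) * Q r.
  have -> : 1 - ps r = \sum_(q | q != r) ps q.
    by rewrite -ps_sum1 (bigD1 r) //= addrAC subrr add0r.
  rewrite mulr_suml.
  apply: eq_bigr => q qr; congr (_ * _).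
  rewrite -[RHS]mul1r -(pr_sum1 q) mulr_suml; apply: eq_bigr => b _.
  by rewrite /qupdate eq_sym (negbTE qr).
have -> : \sum_(b <- supp r) pr r b * qupdate c Q (lam l) r b r =
   \sum_(b <- supp r) (pr r b * ((1 - lam l) * Q r + lam l * c r)
                       + lam l * (pr r b * \sum_(t <- b) Q t)).
  by apply: eq_bigr => b _; rewrite /qupdate eqxx; ring.
by rewrite big_split /= -mulr_suml pr_sum1 -mulr_sumr /Bop; ring.
Qed.

Lemma EQi_rec Q0 i r : EQi c pr supp ps lam Q0 i.+1 r =
  EQi c pr supp ps lam Q0 i r
  + ps r * lam i * (c r + Bop pr supp (EQi c pr supp ps lam Q0 i) r
                    - EQi c pr supp ps lam Q0 i r).
Proof. by rewrite /EQi EQ_last mean_stepE. Qed.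

End ExpectedRecursion.

(* Finitely many positive ratios c/s admit a uniform positive lower bound,
   i.e. s - c <= gam s for one gam < 1 (take gam = 1 - 1/(1 + sum_r s r/c r)). *)
Lemma uniform_contraction (R : realFieldType) (T : finType) (c s : T -> R) :
  (forall r, 0 < c r) -> (forall r, 0 < s r) ->
  exists2 gam, 0 <= gam < 1 & forall r, s r - c r <= gam * s r.
Proof.
move=> c_gt0 s_gt0; set S := \sum_(r : T) s r / c r.
have ratio_ge0 r : 0 <= s r / c r by rewrite divr_ge0 ?ltW.
have S1 : 0 < 1 + S by rewrite ltr_pwDl // sumr_ge0.
exists (1 - (1 + S)^-1).
  apply/andP; split; last by rewrite ltrBlDr ltrDl invr_gt0.
  by rewrite subr_ge0 invr_le1 ?unitfE ?gt_eqF // lerDl sumr_ge0.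
move=> r; rewrite mulrBl mul1r lerD2l lerN2 ler_pdivrMl // -ler_pdivrMr //.
apply: (@le_trans _ _ S); last by rewrite addrC lerDl.
by rewrite /S (bigD1 r) //= lerDl sumr_ge0.
Qed.

Lemma finite_fixpoint (R : realType) (T : finType) (c : T -> R)
    (pr : T -> seq T -> R) (supp : T -> seq (seq T)) (cs : T -> \bar R) :
  is_least_fixpoint c pr supp cs -> (forall q, (cs q < +oo)%E) ->
  forall r, fine (cs r) = c r + Bop pr supp (fun t => fine (cs t)) r.
Proof.
move=> [cs_ge0 cs_fix _] cs_fin.
have csE r : cs r = (fine (cs r))%:E by rewrite fineK // ge0_fin_numE.
move=> r; apply/eqP; rewrite -eqe; apply/eqP; rewrite -csE.
rewrite -[in LHS]cs_fix /Fop EFinD /Bop -sumEFin; congr (_ + _)%E.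
apply: eq_bigr => b _; rewrite EFinM -sumEFin; congr (_ * _)%E.
by apply: eq_bigr => t _; rewrite -csE.
Qed.

Theorem theorem4 (R : realType) (T : finType)
  (c : T -> R) (pr : T -> seq T -> R) (supp : T -> seq (seq T))
  (cs : T -> \bar R)
  (lam : nat -> R) (ps : T -> R) (pmin : R) (Q0 : T -> R) :
  is_BMC c pr supp ->
  is_least_fixpoint c pr supp cs ->
  (forall q, (cs q < +oo)%E) ->
  (forall i, 0 <= lam i <= 1) ->
  (series lam @ \oo --> +oo) ->
  (forall q, 0 <= ps q) -> \sum_(q : T) ps q = 1 ->
  0 < pmin -> (forall q, pmin <= ps q) ->
  (forall q, 0 <= Q0 q) ->
  forall q, (fun i => EQi c pr supp ps lam Q0 i q) @ \oo --> fine (cs q).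
Proof.
move=> [c_gt0 pr_ge0 _ _ pr_sum1] cs_lfp cs_fin lam01 lam_div ps_ge0 ps_sum1
  pmin_gt0 pmin_le _ q.
pose s r := fine (cs r).
have s_fix : forall r, s r = c r + Bop pr supp s r := finite_fixpoint cs_lfp cs_fin.
have Bs_ge0 r : 0 <= Bop pr supp s r.
  apply: sumr_ge0 => b _; rewrite mulr_ge0 // sumr_ge0 // => t _.
  by rewrite /s fine_ge0 //; case: cs_lfp.
have s_gt0 r : 0 < s r by rewrite s_fix ltr_pwDl.
have [gam gam01 contr] := uniform_contraction c_gt0 s_gt0.
have Bs_le r : Bop pr supp s r <= gam * s r.
  by have := contr r; rewrite {1}s_fix addrAC subrr add0r.
have lam_ge0 i : 0 <= lam i by case/andP: (lam01 i).
have ps_le1 r : ps r <= 1 by rewrite -ps_sum1 (bigD1 r) //= lerDl sumr_ge0.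
apply: (@averaged_recursion_cvg _ _ pr supp c s gam pmin lam
  (fun i r => ps r * lam i)) => // [i r|i r|i r].
- by case/andP: (lam01 i) => l0 l1; rewrite mulr_ge0 // mulr_ile1.
- by rewrite ler_wpM2r.
- exact: EQi_rec.
Qed.
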